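(* Let $0<q<1/2$, $p=1-q$, $\lambda=q/p$, $c(x)=x-1-\log x$ for $x>0$, and for integers $z\ge1$ let $$P_{SN}(z)=1-\sum_{k=0}^{z-1}e^{-zq/p}\frac{(zq/p)^k}{k!}\left(1-\left(\frac qp\right)^{z-k}\right).$$ Then as $z\to+\infty$, $$P_{SN}(z)\sim\frac{e^{-zc(\lambda)}}{2}.$$
   Context: $P_{SN}(z)$ is Nakamoto's approximation of the probability of success of a double-spend attack by attackers with relative hash power $q$ after $z$ confirmations. Note $c(\lambda)>0$ for $\lambda\neq1$. *)

From Stdlib Require Import Reals List Factorial.
From Coquelicot Require Import Coquelicot.
Open Scope R_scope.

Definition c_fun (x : R) : R := x - 1 - ln x.

Definition sum_lt (n : nat) (f : nat -> R) : R :=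
  fold_right Rplus 0 (map f (seq 0 n)).

Definition P_SN (q : R) (z : nat) : R :=
  let p := 1 - q in
  1 - sum_lt z (fun k =>
        exp (- (INR z * q / p)) * (INR z * q / p) ^ k / INR (fact k)
        * (1 - (q / p) ^ (z - k))).

From Stdlib Require Import Reals Factorial Lra Lia Psatz List.
From Coquelicot Require Import Coquelicot.
Open Scope R_scope.

(* Write [exp_sum x m] for sum_{k<m} x^k/k! and mu = z lambda.  Then
   P_SN(z) = 1 - e^{-mu} exp_sum mu z + e^{-mu} lambda^z exp_sum z z and
   e^{-z c(lambda)} = e^{-mu} e^z lambda^z, so the ratio to be studied is
   2 P(X_z < z) + 2 (e^mu - exp_sum mu z) / (e^z lambda^z) with X_z ~ Poisson(z).
   Bounding the exponential tail beyond z by a geometric series, the second term is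
   at most P(X_z = z) / (1 - lambda), and P(X_z = z) <= 3 / (sqrt z + 1) because
   each of the sqrt z weights just above the mean is at least P(X_z = z) / e.
   For the first term, pair the weights at z - 1 - j and z + j: the lower one never
   exceeds the upper one, whence P(X_z < z) <= 1/2, and for j < J it is at least
   (1 - J^2/z^2)^j times the upper one.  With J = K sqrt z this factor costs
   O(K^3 / sqrt z) and the mass beyond z + J is O(1/K), so P(X_z < z) -> 1/2. *)

Lemma sum_lt_S n f : sum_lt (S n) f = sum_lt n f + f n.
Proof.
  unfold sum_lt. rewrite seq_S, map_app, fold_right_app. simpl.
  induction (map f (seq 0 n)) as [|a l IH]; simpl; [ring|]. rewrite IH. ring.
Qed.

Lemma sum_lt_ext n f g :
  (forall k, (k < n)%nat -> f k = g k) -> sum_lt n f = sum_lt n g.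
Proof.
  induction n as [|n IH]; intros H; [reflexivity|].
  rewrite !sum_lt_S, IH, H; [reflexivity|lia|intros; apply H; lia].
Qed.

Lemma sum_lt_le n f g :
  (forall k, (k < n)%nat -> f k <= g k) -> sum_lt n f <= sum_lt n g.
Proof.
  induction n as [|n IH]; intros H; [apply Rle_refl|]. rewrite !sum_lt_S.
  apply Rplus_le_compat; [apply IH; intros; apply H|apply H]; lia.
Qed.

Lemma sum_lt_const n c : sum_lt n (fun _ => c) = INR n * c.
Proof. induction n; [unfold sum_lt; simpl; ring|]. rewrite sum_lt_S, IHn, S_INR. ring. Qed.

Lemma sum_lt_ge0 n f : (forall k, (k < n)%nat -> 0 <= f k) -> 0 <= sum_lt n f.
Proof.
  intros H. replace 0 with (sum_lt n (fun _ => 0)) by (rewrite sum_lt_const; ring).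
  now apply sum_lt_le.
Qed.

Lemma sum_lt_scal n a f : sum_lt n (fun k => a * f k) = a * sum_lt n f.
Proof. induction n; [unfold sum_lt; simpl; ring|]. rewrite !sum_lt_S, IHn. ring. Qed.

Lemma sum_lt_minus n f g : sum_lt n (fun k => f k - g k) = sum_lt n f - sum_lt n g.
Proof. induction n; [unfold sum_lt; simpl; ring|]. rewrite !sum_lt_S, IHn. ring. Qed.

Lemma sum_lt_add m n f :
  sum_lt (m + n) f = sum_lt m f + sum_lt n (fun j => f (m + j)%nat).
Proof.
  induction n as [|n IH]; [rewrite Nat.add_0_r; unfold sum_lt at 3; simpl; ring|].
  rewrite Nat.add_succ_r, !sum_lt_S, IH. ring.
Qed.

Lemma sum_lt_rev n f : sum_lt n (fun j => f (n - 1 - j)%nat) = sum_lt n f.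
Proof.
  induction n as [|n IH]; [reflexivity|].
  change (S n) with (1 + n)%nat at 1.
  rewrite sum_lt_add, sum_lt_S, sum_lt_S, <- IH.
  rewrite (sum_lt_ext n _ (fun j => f (n - 1 - j)%nat)) by (intros; f_equal; lia).
  replace (S n - 1 - 0)%nat with n by lia. unfold sum_lt at 1; simpl. ring.
Qed.

Lemma sum_lt_sum_f_R0 n f : sum_lt (S n) f = sum_f_R0 f n.
Proof. induction n; [unfold sum_lt; simpl; ring|]. rewrite sum_lt_S, IHn. reflexivity. Qed.

Lemma sum_lt_geom r n : sum_lt n (fun i => r ^ i) * (1 - r) = 1 - r ^ n.
Proof. induction n; [unfold sum_lt; simpl; ring|]. rewrite sum_lt_S. simpl pow. nra. Qed.

Definition exp_term (x : R) (k : nat) : R := x ^ k / INR (fact k).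

Definition exp_sum (x : R) (m : nat) : R := sum_lt m (exp_term x).

Lemma exp_term_S x k : exp_term x (S k) = exp_term x k * (x / INR (S k)).
Proof.
  unfold exp_term. rewrite fact_simpl, mult_INR. simpl pow.
  assert (INR (fact k) <> 0) by apply INR_fact_neq_0.
  assert (INR (S k) <> 0) by (apply not_0_INR; lia).
  field. auto.
Qed.

Lemma exp_term_ge0 x k : 0 <= x -> 0 <= exp_term x k.
Proof.
  intros Hx. apply Rdiv_le_0_compat; [now apply pow_le|apply lt_0_INR, lt_O_fact].
Qed.

Lemma exp_term_gt0 x k : 0 < x -> 0 < exp_term x k.
Proof.
  intros Hx. apply Rdiv_lt_0_compat; [now apply pow_lt|apply lt_0_INR, lt_O_fact].
Qed.

Lemma exp_sum_ge0 x m : 0 <= x -> 0 <= exp_sum x m.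
Proof. intros Hx. apply sum_lt_ge0. intros. now apply exp_term_ge0. Qed.

Lemma is_lim_seq_exp_sum x : is_lim_seq (exp_sum x) (exp x).
Proof.
  apply is_lim_seq_incr_1, is_lim_seq_Reals.
  unfold exp. destruct (exist_exp x) as [l Hl]; simpl.
  intros eps Heps. destruct (Hl eps Heps) as [N HN]. exists N. intros n Hn.
  unfold exp_sum. rewrite sum_lt_sum_f_R0.
  rewrite (sum_eq _ (fun i => / INR (fact i) * x ^ i)) by (intros; unfold exp_term, Rdiv; ring).
  now apply HN.
Qed.

Lemma exp_sum_le_exp x m : 0 <= x -> exp_sum x m <= exp x.
Proof.
  intros Hx. destruct m as [|m]; [unfold exp_sum, sum_lt; simpl; apply Rlt_le, exp_pos|].
  unfold exp_sum. rewrite sum_lt_sum_f_R0. now apply exp_ge_taylor.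
Qed.

Lemma exp_term_shift_le x m i : 0 <= x ->
  exp_term x (m + i) <= exp_term x m * (x / INR (S m)) ^ i.
Proof.
  intros Hx. induction i as [|i IH].
  - rewrite Nat.add_0_r. simpl. lra.
  - rewrite Nat.add_succ_r, exp_term_S, <- tech_pow_Rmult.
    assert (Hm : 0 < INR (S m)) by (apply lt_0_INR; lia).
    assert (Hr : 0 <= x / INR (S (m + i)) <= x / INR (S m)).
    { split; [apply Rdiv_le_0_compat; [lra|apply lt_0_INR; lia]|].
      apply Rmult_le_compat_l; [lra|]. apply Rinv_le_contravar; [lra|apply le_INR; lia]. }
    assert (0 <= exp_term x (m + i)) by now apply exp_term_ge0.
    assert (0 <= exp_term x m * (x / INR (S m)) ^ i).
    { apply Rmult_le_pos; [now apply exp_term_ge0|apply pow_le; lra]. }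
    apply Rle_trans with (exp_term x m * (x / INR (S m)) ^ i * (x / INR (S m))); [|right; ring].
    apply Rmult_le_compat; lra.
Qed.

Lemma exp_term_shift_ge x m i : 0 <= x -> (0 < m)%nat ->
  exp_term x m * (x / INR (m + i)) ^ i <= exp_term x (m + i).
Proof.
  intros Hx Hm. induction i as [|i IH].
  - rewrite Nat.add_0_r. simpl. lra.
  - rewrite Nat.add_succ_r, exp_term_S, <- tech_pow_Rmult.
    assert (Hmi : 0 < INR (m + i)) by (apply lt_0_INR; lia).
    assert (Hr : 0 <= x / INR (S (m + i)) <= x / INR (m + i)).
    { split; [apply Rdiv_le_0_compat; [lra|apply lt_0_INR; lia]|].
      apply Rmult_le_compat_l; [lra|]. apply Rinv_le_contravar; [lra|apply le_INR; lia]. }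
    assert (0 <= (x / INR (S (m + i))) ^ i <= (x / INR (m + i)) ^ i).
    { split; [apply pow_le; lra|apply pow_incr; lra]. }
    assert (0 <= exp_term x m) by now apply exp_term_ge0.
    apply Rle_trans with (x / INR (S (m + i)) * (exp_term x m * (x / INR (m + i)) ^ i)).
    + replace (exp_term x m * (x / INR (S (m + i)) * (x / INR (S (m + i))) ^ i))
        with (x / INR (S (m + i)) * (exp_term x m * (x / INR (S (m + i))) ^ i)) by ring.
      apply Rmult_le_compat_l; [lra|]. apply Rmult_le_compat_l; lra.
    + rewrite Rmult_comm. apply Rmult_le_compat_r; lra.
Qed.

Lemma exp_sub_exp_sum_le x m : 0 <= x -> x < INR (S m) ->
  exp x - exp_sum x m <= exp_term x m * (INR (S m) / (INR (S m) - x)).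
Proof.
  intros Hx0 Hx1. set (r := x / INR (S m)).
  assert (Hr : 0 <= r < 1).
  { unfold r. split; [apply Rdiv_le_0_compat; lra|].
    apply Rmult_lt_reg_r with (INR (S m)); [lra|]. field_simplify; lra. }
  replace (INR (S m) / (INR (S m) - x)) with (/ (1 - r)) by (unfold r; field; lra).
  assert (Hpartial : forall n, exp_sum x (m + n) - exp_sum x m <= exp_term x m * / (1 - r)).
  { intros n. unfold exp_sum. rewrite sum_lt_add.
    apply Rle_trans with (sum_lt n (fun i => exp_term x m * r ^ i)).
    - enough (sum_lt n (fun j => exp_term x (m + j)) <= sum_lt n (fun i => exp_term x m * r ^ i)) by lra.
      apply sum_lt_le. intros. now apply exp_term_shift_le.
    - rewrite sum_lt_scal. apply Rmult_le_compat_l; [now apply exp_term_ge0|].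
      apply Rmult_le_reg_r with (1 - r); [lra|]. rewrite sum_lt_geom, Rinv_l by lra.
      assert (0 <= r ^ n) by (apply pow_le; lra). lra. }
  assert (Hlim := proj1 (is_lim_seq_incr_n _ m _) (is_lim_seq_exp_sum x)).
  change (Rbar_le (exp x - exp_sum x m) (exp_term x m * / (1 - r))).
  apply (is_lim_seq_le (fun n => exp_sum x (n + m) - exp_sum x m) (fun _ => exp_term x m * / (1 - r))).
  - intros n. rewrite Nat.add_comm. apply Hpartial.
  - apply (is_lim_seq_minus' _ _ (exp x) (exp_sum x m)); [exact Hlim|apply is_lim_seq_const].
  - apply is_lim_seq_const.
Qed.

Lemma pow_le_pow_of_le_one b i j : 0 <= b <= 1 -> (i <= j)%nat -> b ^ j <= b ^ i.
Proof.
  intros Hb Hij. induction Hij as [|j Hij IH]; [lra|].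
  rewrite <- tech_pow_Rmult. assert (0 <= b ^ j) by (apply pow_le; lra). nra.
Qed.

Lemma one_sub_mul_le_pow t k : 0 <= t <= 1 -> 1 - INR k * t <= (1 - t) ^ k.
Proof.
  intros Ht. induction k as [|k IH]; [simpl; lra|].
  rewrite <- tech_pow_Rmult, S_INR. assert (0 <= INR k) by apply pos_INR. nra.
Qed.

Lemma pow_one_add_le_exp y k : 0 <= y -> (1 + y) ^ k <= exp (INR k * y).
Proof.
  intros Hy. induction k as [|k IH]; [simpl; rewrite Rmult_0_l, exp_0; lra|].
  rewrite <- tech_pow_Rmult, S_INR.
  replace ((INR k + 1) * y) with (y + INR k * y) by ring. rewrite exp_plus.
  assert (1 + y <= exp y) by apply exp_ineq1_le.
  assert (0 <= (1 + y) ^ k) by (apply pow_le; lra).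
  apply Rmult_le_compat; lra.
Qed.

Lemma inv_exp_one_le_pow x k : 0 < x -> INR k ^ 2 <= x -> / exp 1 <= (x / (x + INR k)) ^ k.
Proof.
  intros Hx Hk. assert (0 <= INR k) by apply pos_INR.
  assert (Hprod : (x / (x + INR k)) ^ k * (1 + INR k / x) ^ k = 1).
  { rewrite <- Rpow_mult_distr.
    replace (x / (x + INR k) * (1 + INR k / x)) with 1 by (field; lra). apply pow1. }
  assert (Hgrowth : (1 + INR k / x) ^ k <= exp 1).
  { eapply Rle_trans; [apply pow_one_add_le_exp; apply Rdiv_le_0_compat; lra|].
    assert (Hle : INR k * (INR k / x) <= 1)
      by (apply Rmult_le_reg_r with x; [lra|]; field_simplify; lra).
    destruct (Rle_lt_or_eq_dec _ _ Hle) as [Hlt|Heq]; [apply Rlt_le, exp_increasing, Hlt|rewrite Heq; lra]. }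
  assert (0 < (1 + INR k / x) ^ k).
  { apply pow_lt, Rplus_lt_le_0_compat; [lra|apply Rdiv_le_0_compat; lra]. }
  assert (0 < exp 1) by apply exp_pos.
  apply Rmult_le_reg_r with (exp 1 * (1 + INR k / x) ^ k); [apply Rmult_lt_0_compat; lra|].
  field_simplify; [|lra]. nra.
Qed.

Lemma half_sub_le_of_balance a r e g d : 0 <= a -> 0 <= r -> 0 <= e -> 0 <= g -> 1 - e <= g ->
  g * d <= a -> 1 - a - d <= r -> 1 / 2 - a <= e / 2 + r.
Proof.
  intros Ha Hr He Hg Hge Hgd Hd.
  destruct (Rle_lt_dec (1 - a - r) 0) as [Hneg|Hpos]; [lra|].
  assert (g * (1 - a - r) <= g * d) by (apply Rmult_le_compat_l; lra).
  assert ((1 - e) * (1 - a - r) <= g * (1 - a - r)) by (apply Rmult_le_compat_r; lra).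
  assert (0 <= e * (a + r)) by (apply Rmult_le_pos; lra).
  lra.
Qed.

Lemma exp_term_mirror_step x m j : (j < m)%nat ->
  exp_term x (S m + S j) * exp_term x (m - j) * (INR (S m) ^ 2 - INR (S j) ^ 2)
  = exp_term x (S m + j) * exp_term x (m - S j) * x ^ 2.
Proof.
  intros Hj. replace (m - j)%nat with (S (m - S j)) by lia.
  rewrite Nat.add_succ_r, !exp_term_S.
  replace (INR (S (S m + j))) with (INR (S m) + INR (S j)) by (rewrite !S_INR, plus_INR, S_INR; ring).
  replace (INR (S (m - S j))) with (INR (S m) - INR (S j)) by (rewrite !S_INR, minus_INR by lia; rewrite S_INR; ring).
  assert (INR (S j) < INR (S m)) by (apply lt_INR; lia).
  assert (0 <= INR (S j)) by apply pos_INR.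
  field. lra.
Qed.

Section Center.

Variable m : nat.

Local Notation x := (INR (S m)).

Lemma center_gt0 : 0 < x.
Proof. apply lt_0_INR; lia. Qed.

Lemma exp_term_center_S : exp_term x (S m) = exp_term x m.
Proof. rewrite exp_term_S. field. apply Rgt_not_eq, center_gt0. Qed.

Lemma exp_term_mirror_le j : (j <= m)%nat -> exp_term x (m - j) <= exp_term x (S m + j).
Proof.
  induction j as [|j IH]; intros Hj.
  - rewrite Nat.sub_0_r, Nat.add_0_r, exp_term_center_S. lra.
  - assert (Hstep := exp_term_mirror_step x m j Hj).
    assert (Hx := center_gt0).
    assert (INR (S j) <= INR m) by (apply le_INR; lia).
    assert (0 <= INR (S j)) by apply pos_INR.
    assert (Hpos : 0 < exp_term x (S m + j) * x ^ 2).
    { apply Rmult_lt_0_compat; [now apply exp_term_gt0|apply pow_lt; lra]. }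
    assert (0 < exp_term x (S m + S j)) by now apply exp_term_gt0.
    apply Rmult_le_reg_r with (1 := Hpos).
    replace (exp_term x (m - S j) * (exp_term x (S m + j) * x ^ 2))
      with (exp_term x (S m + S j) * exp_term x (m - j) * (x ^ 2 - INR (S j) ^ 2))
      by (rewrite Hstep; ring).
    assert (INR m < x) by (apply lt_INR; lia).
    rewrite Rmult_assoc. apply Rmult_le_compat_l; [lra|].
    apply Rmult_le_compat; [apply exp_term_ge0; lra|nra|apply IH; lia|nra].
Qed.

Lemma exp_term_mirror_ge J beta j : 0 <= beta -> beta * x ^ 2 <= x ^ 2 - INR J ^ 2 ->
  (j < J)%nat -> (j <= m)%nat -> beta ^ j * exp_term x (S m + j) <= exp_term x (m - j).
Proof.
  intros Hbeta HJ. induction j as [|j IH]; intros HjJ Hjm.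
  - rewrite Nat.sub_0_r, Nat.add_0_r, exp_term_center_S. simpl. lra.
  - assert (Hstep := exp_term_mirror_step x m j Hjm).
    assert (Hx := center_gt0).
    assert (INR (S j) <= INR J) by (apply le_INR; lia).
    assert (0 <= INR (S j)) by apply pos_INR.
    assert (Hpos : 0 < exp_term x (m - j) * x ^ 2).
    { apply Rmult_lt_0_compat; [now apply exp_term_gt0|apply pow_lt; lra]. }
    assert (0 < exp_term x (S m + S j)) by now apply exp_term_gt0.
    assert (0 <= beta ^ j) by now apply pow_le.
    specialize (IH ltac:(lia) ltac:(lia)).
    apply Rmult_le_reg_r with (1 := Hpos).
    apply Rle_trans with (beta ^ j * exp_term x (S m + S j) * exp_term x (m - j) * (x ^ 2 - INR (S j) ^ 2)).
    + rewrite <- tech_pow_Rmult.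
      assert (beta * x ^ 2 <= x ^ 2 - INR (S j) ^ 2) by nra.
      assert (0 <= beta ^ j * exp_term x (S m + S j) * exp_term x (m - j)).
      { apply Rmult_le_pos; [apply Rmult_le_pos|]; lra || (apply exp_term_ge0; lra). }
      nra.
    + replace (beta ^ j * exp_term x (S m + S j) * exp_term x (m - j) * (x ^ 2 - INR (S j) ^ 2))
        with (beta ^ j * (exp_term x (S m + S j) * exp_term x (m - j) * (x ^ 2 - INR (S j) ^ 2)))
        by ring.
      rewrite Hstep.
      assert (0 <= exp_term x (m - S j) * x ^ 2).
      { apply Rmult_le_pos; [apply exp_term_ge0|apply pow_le]; lra. }
      nra.
Qed.

Lemma exp_sum_center_mirror :
  exp_sum x (S m) = sum_lt (S m) (fun j => exp_term x (m - j)).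
Proof.
  unfold exp_sum. rewrite <- (sum_lt_rev (S m)).
  apply sum_lt_ext. intros. f_equal. lia.
Qed.

Lemma two_mul_exp_sum_center_le : 2 * exp_sum x (S m) <= exp x.
Proof.
  assert (Hx := center_gt0).
  assert (Hmirror : exp_sum x (S m) <= sum_lt (S m) (fun j => exp_term x (S m + j))).
  { rewrite exp_sum_center_mirror. apply sum_lt_le. intros j Hj.
    apply exp_term_mirror_le. lia. }
  assert (Hsplit : exp_sum x (S m + S m) = exp_sum x (S m) + sum_lt (S m) (fun j => exp_term x (S m + j)))
    by apply sum_lt_add.
  assert (exp_sum x (S m + S m) <= exp x) by (apply exp_sum_le_exp; lra).
  lra.
Qed.

Lemma poisson_below_mean_le_half : exp (- x) * exp_sum x (S m) <= 1 / 2.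
Proof.
  assert (Htwo := two_mul_exp_sum_center_le).
  assert (0 < exp (- x)) by apply exp_pos.
  assert (exp (- x) * exp x = 1) by (rewrite <- exp_plus, Rplus_opp_l; apply exp_0).
  nra.
Qed.

Lemma pow_mul_sum_mirror_le J beta : (J <= S m)%nat -> 0 <= beta <= 1 ->
  beta * x ^ 2 <= x ^ 2 - INR J ^ 2 ->
  beta ^ J * sum_lt J (fun j => exp_term x (S m + j)) <= exp_sum x (S m).
Proof.
  intros HJ Hbeta Hgap. assert (Hx := center_gt0).
  rewrite <- sum_lt_scal, exp_sum_center_mirror.
  assert (Hsplit : sum_lt (S m) (fun j => exp_term x (m - j))
    = sum_lt J (fun j => exp_term x (m - j)) + sum_lt (S m - J) (fun j => exp_term x (m - (J + j))))
    by (rewrite <- sum_lt_add; f_equal; lia).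
  assert (0 <= sum_lt (S m - J) (fun j => exp_term x (m - (J + j))))
    by (apply sum_lt_ge0; intros; apply exp_term_ge0; lra).
  enough (sum_lt J (fun j => beta ^ J * exp_term x (S m + j)) <= sum_lt J (fun j => exp_term x (m - j)))
    by lra.
  apply sum_lt_le. intros j Hj.
  apply Rle_trans with (beta ^ j * exp_term x (S m + j)).
  - apply Rmult_le_compat_r; [apply exp_term_ge0; lra|].
    apply pow_le_pow_of_le_one; [lra|lia].
  - apply exp_term_mirror_ge with J; lra || lia.
Qed.

Lemma exp_sub_exp_sum_center_le J :
  exp x - exp_sum x (S m + J) <= exp_term x (S m) * ((x + INR J + 1) / (INR J + 1)).
Proof.
  assert (Hx := center_gt0). assert (0 <= INR J) by apply pos_INR.
  replace (x + INR J + 1) with (INR (S (S m + J))) by (rewrite S_INR, plus_INR; ring).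
  replace (INR J + 1) with (INR (S (S m + J)) - x) by (rewrite S_INR, plus_INR; ring).
  assert (x < INR (S (S m + J))) by (apply lt_INR; lia).
  eapply Rle_trans; [apply exp_sub_exp_sum_le; lra|].
  apply Rmult_le_compat_r; [apply Rdiv_le_0_compat; lra|].
  eapply Rle_trans; [apply exp_term_shift_le; lra|].
  assert (0 <= x / INR (S (S m)) <= 1).
  { assert (x < INR (S (S m))) by (apply lt_INR; lia).
    split; [apply Rdiv_le_0_compat; lra|].
    apply Rmult_le_reg_r with (INR (S (S m))); [lra|]. field_simplify; lra. }
  assert ((x / INR (S (S m))) ^ J <= 1) by (apply pow_le_pow_of_le_one with (i := 0%nat); lra || lia).
  assert (0 <= exp_term x (S m)) by (apply exp_term_ge0; lra).
  nra.
Qed.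

Lemma half_sub_poisson_below_mean_le J : (J <= S m)%nat ->
  1 / 2 - exp (- x) * exp_sum x (S m)
  <= INR J ^ 3 / x ^ 2 / 2 + exp (- x) * exp_term x (S m) * ((x + INR J + 1) / (INR J + 1)).
Proof.
  intros HJ. assert (Hx := center_gt0).
  assert (HJx : INR J <= x) by (apply le_INR; lia).
  assert (0 <= INR J) by apply pos_INR.
  set (theta := INR J ^ 2 / x ^ 2).
  assert (Htheta : 0 <= theta <= 1).
  { unfold theta. split; [apply Rdiv_le_0_compat; nra|].
    apply Rmult_le_reg_r with (x ^ 2); [nra|]. field_simplify; nra. }
  replace (INR J ^ 3 / x ^ 2 / 2) with (INR J * theta / 2) by (unfold theta; field; lra).
  set (D := sum_lt J (fun j => exp_term x (S m + j))).
  assert (Hexp : 0 < exp (- x)) by apply exp_pos.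
  apply half_sub_le_of_balance with ((1 - theta) ^ J) (exp (- x) * D).
  - apply Rmult_le_pos; [lra|apply exp_sum_ge0; lra].
  - apply Rmult_le_pos; [apply Rmult_le_pos; [lra|apply exp_term_ge0; lra]|].
    apply Rdiv_le_0_compat; lra.
  - nra.
  - apply pow_le. lra.
  - now apply one_sub_mul_le_pow.
  - replace ((1 - theta) ^ J * (exp (- x) * D)) with (exp (- x) * ((1 - theta) ^ J * D)) by ring.
    apply Rmult_le_compat_l; [lra|]. apply pow_mul_sum_mirror_le; [lia|lra|].
    unfold theta. field_simplify; nra.
  - assert (Hrest := exp_sub_exp_sum_center_le J).
    assert (Hsplit : exp_sum x (S m + J) = exp_sum x (S m) + D) by apply sum_lt_add.
    assert (Hinv : exp (- x) * exp x = 1) by (rewrite <- exp_plus, Rplus_opp_l; apply exp_0).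
    replace (1 - exp (- x) * exp_sum x (S m) - exp (- x) * D)
      with (exp (- x) * (exp x - exp_sum x (S m + J))) by (rewrite Hsplit; lra).
    rewrite Rmult_assoc. apply Rmult_le_compat_l; lra.
Qed.

Local Notation s := (Nat.sqrt (S m)).

Lemma sqrt_center_sq_le : INR s ^ 2 <= x.
Proof.
  rewrite <- pow_INR. apply le_INR. simpl. rewrite Nat.mul_1_r. apply Nat.sqrt_spec. lia.
Qed.

Lemma exp_term_center_shift_ge i : (i <= s)%nat ->
  exp_term x (S m) / exp 1 <= exp_term x (S m + i).
Proof.
  intros Hi. assert (Hx := center_gt0). assert (Hs := sqrt_center_sq_le).
  assert (0 <= INR i <= INR s) by (split; [apply pos_INR|apply le_INR; lia]).
  assert (Hb : 0 <= x / (x + INR s) <= 1).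
  { split; [apply Rdiv_le_0_compat; lra|].
    apply Rmult_le_reg_r with (x + INR s); [lra|]. field_simplify; lra. }
  assert (Hbi : (x / (x + INR s)) ^ s <= (x / INR (S m + i)) ^ i).
  { eapply Rle_trans; [apply pow_le_pow_of_le_one; [exact Hb|exact Hi]|].
    apply pow_incr. split; [lra|].
    rewrite plus_INR. apply Rmult_le_compat_l; [lra|]. apply Rinv_le_contravar; lra. }
  assert (Hbs := inv_exp_one_le_pow x s Hx Hs).
  assert (0 <= exp_term x (S m)) by (apply exp_term_ge0; lra).
  eapply Rle_trans; [|apply exp_term_shift_ge; lra || lia].
  unfold Rdiv at 1. apply Rmult_le_compat_l; lra.
Qed.

Lemma sqrt_mul_exp_term_center_le : (INR s + 1) * exp_term x (S m) <= exp 1 * exp x.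
Proof.
  assert (Hx := center_gt0). assert (He : 0 < exp 1) by apply exp_pos.
  assert (Hwindow : INR (S s) * (exp_term x (S m) / exp 1) <= exp x).
  { rewrite <- sum_lt_const.
    apply Rle_trans with (sum_lt (S s) (fun i => exp_term x (S m + i))).
    - apply sum_lt_le. intros. apply exp_term_center_shift_ge. lia.
    - assert (exp_sum x (S m + S s) = exp_sum x (S m) + sum_lt (S s) (fun i => exp_term x (S m + i)))
        by apply sum_lt_add.
      assert (0 <= exp_sum x (S m)) by (apply exp_sum_ge0; lra).
      assert (exp_sum x (S m + S s) <= exp x) by (apply exp_sum_le_exp; lra).
      lra. }
  rewrite S_INR in Hwindow.
  replace ((INR s + 1) * exp_term x (S m)) with ((INR s + 1) * (exp_term x (S m) / exp 1) * exp 1)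
    by (field; lra).
  rewrite Rmult_comm. apply Rmult_le_compat_l; lra.
Qed.

Lemma poisson_at_mean_le : exp (- x) * exp_term x (S m) <= 3 / (INR s + 1).
Proof.
  assert (0 <= INR s) by apply pos_INR.
  assert (Hw := sqrt_mul_exp_term_center_le).
  assert (Hinv : exp (- x) * exp x = 1) by (rewrite <- exp_plus, Rplus_opp_l; apply exp_0).
  assert (0 < exp (- x)) by apply exp_pos.
  assert (He3 := exp_le_3).
  apply Rmult_le_reg_r with (INR s + 1); [lra|].
  replace (3 / (INR s + 1) * (INR s + 1)) with 3 by (field; lra).
  apply Rle_trans with (exp (- x) * (exp 1 * exp x)).
  - rewrite Rmult_assoc, (Rmult_comm (exp_term _ _)). apply Rmult_le_compat_l; lra.
  - replace (exp (- x) * (exp 1 * exp x)) with (exp 1 * (exp (- x) * exp x)) by ring.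
    rewrite Hinv. lra.
Qed.

End Center.

(* The two error terms of [half_sub_poisson_below_mean_le] for the window J = K s,
   where s^2 <= x < (s + 1)^2 and t is the Poisson weight at the mean. *)
Lemma sqrt_window_bound K s x t : 1 <= K -> 1 <= s -> s ^ 2 <= x ->
  x + 1 <= (s + 1) ^ 2 -> 0 <= t <= 3 / (s + 1) ->
  (K * s) ^ 3 / x ^ 2 / 2 + t * ((x + K * s + 1) / (K * s + 1)) <= (K ^ 3 + 3) / s + 6 / K.
Proof.
  intros HK Hs Hx Hx1 Ht.
  assert (HKs : 1 <= K * s) by nra.
  assert (Hcube : (K * s) ^ 3 / x ^ 2 / 2 <= K ^ 3 / s).
  { assert (s ^ 2 * s ^ 2 <= x ^ 2) by (rewrite <- Rpow_mult_distr; apply pow_incr; nra).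
    assert (0 <= (K * s) ^ 3) by (apply pow_le; nra).
    assert (0 < s ^ 2 * s ^ 2) by (apply Rmult_lt_0_compat; apply pow_lt; lra).
    assert (0 <= (K * s) ^ 3 / x ^ 2) by (apply Rdiv_le_0_compat; lra).
    replace (K ^ 3 / s) with ((K * s) ^ 3 / (s ^ 2 * s ^ 2)) by (field; lra).
    apply Rle_trans with ((K * s) ^ 3 / x ^ 2); [lra|].
    apply Rmult_le_compat_l; [lra|]. apply Rinv_le_contravar; lra. }
  assert (Hratio : (x + K * s + 1) / (K * s + 1) <= (s + 1) ^ 2 / (K * s + 1) + 1).
  { apply Rmult_le_reg_r with (K * s + 1); [lra|]. field_simplify; nra. }
  assert (Hsplit : 3 / (s + 1) * ((s + 1) ^ 2 / (K * s + 1) + 1) <= 6 / K + 3 / (s + 1)).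
  { replace (3 / (s + 1) * ((s + 1) ^ 2 / (K * s + 1) + 1))
      with (3 * (s + 1) / (K * s + 1) + 3 / (s + 1)) by (field; lra).
    apply Rplus_le_compat_r. apply Rmult_le_reg_r with (K * (K * s + 1)); [nra|].
    field_simplify; nra. }
  assert (3 / (s + 1) <= 3 / s).
  { apply Rmult_le_compat_l; [lra|]. apply Rinv_le_contravar; lra. }
  assert (0 <= (x + K * s + 1) / (K * s + 1)) by (apply Rdiv_le_0_compat; nra).
  assert (t * ((x + K * s + 1) / (K * s + 1)) <= 3 / (s + 1) * ((s + 1) ^ 2 / (K * s + 1) + 1)).
  { apply Rle_trans with (3 / (s + 1) * ((x + K * s + 1) / (K * s + 1))).
    - apply Rmult_le_compat_r; lra.
    - apply Rmult_le_compat_l; [apply Rdiv_le_0_compat; lra|lra]. }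
  replace ((K ^ 3 + 3) / s) with (K ^ 3 / s + 3 / s) by (field; lra).
  lra.
Qed.

Lemma half_sub_poisson_below_mean_le_sqrt m K : (1 <= K)%nat -> (K <= Nat.sqrt (S m))%nat ->
  1 / 2 - exp (- INR (S m)) * exp_sum (INR (S m)) (S m)
  <= (INR K ^ 3 + 3) / INR (Nat.sqrt (S m)) + 6 / INR K.
Proof.
  intros HK Hs. set (s := Nat.sqrt (S m)) in *.
  assert (Hspec := Nat.sqrt_spec (S m) ltac:(lia)). fold s in Hspec.
  assert (HJ : (K * s <= S m)%nat) by nia.
  eapply Rle_trans; [apply (half_sub_poisson_below_mean_le m (K * s) HJ)|].
  rewrite mult_INR. apply sqrt_window_bound.
  - apply (le_INR 1). exact HK.
  - apply (le_INR 1). lia.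
  - apply sqrt_center_sq_le.
  - replace (INR (S m) + 1) with (INR (S (S m))) by (rewrite (S_INR (S m)); ring).
    replace (INR s + 1) with (INR (S s)) by apply S_INR.
    rewrite <- pow_INR. apply le_INR. simpl. lia.
  - split; [apply Rmult_le_pos; [apply Rlt_le, exp_pos|apply exp_term_ge0, pos_INR]|].
    apply poisson_at_mean_le.
Qed.

Lemma is_lim_seq_sqrt_nat : is_lim_seq (fun n => INR (Nat.sqrt n)) p_infty.
Proof.
  apply is_lim_seq_spec. intros M.
  destruct (INR_archimed 1 M Rlt_0_1) as [N HN].
  exists (N * N)%nat. intros n Hn.
  apply Rlt_le_trans with (INR N); [lra|]. apply le_INR. now apply Nat.sqrt_le_square.
Qed.

Lemma is_lim_seq_poisson_at_mean : is_lim_seq (fun n => exp (- INR n) * exp_term (INR n) n) 0.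
Proof.
  apply is_lim_seq_incr_1.
  apply is_lim_seq_le_le with (u := fun _ => 0) (w := fun n => 3 * / (INR (Nat.sqrt (S n)) + 1)).
  - intros n. split; [apply Rmult_le_pos; [apply Rlt_le, exp_pos|apply exp_term_ge0, pos_INR]|].
    apply poisson_at_mean_le.
  - apply is_lim_seq_const.
  - replace (Finite 0) with (Rbar_mult 3 0) by (simpl; f_equal; ring).
    apply is_lim_seq_scal_l. replace (Finite 0) with (Rbar_inv p_infty) by reflexivity.
    apply is_lim_seq_inv; [|discriminate].
    apply is_lim_seq_plus with p_infty 1; [| apply is_lim_seq_const | reflexivity].
    apply (is_lim_seq_incr_1 (fun n => INR (Nat.sqrt n))), is_lim_seq_sqrt_nat.
Qed.

Lemma is_lim_seq_poisson_below_mean :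
  is_lim_seq (fun n => exp (- INR n) * exp_sum (INR n) n) (1 / 2).
Proof.
  apply is_lim_seq_incr_1, is_lim_seq_spec. intros eps.
  assert (Heps := cond_pos eps).
  destruct (INR_archimed 1 (12 / eps) Rlt_0_1) as [N HN]. set (K := S N).
  assert (HK : 12 / eps < INR K) by (unfold K; rewrite S_INR; lra).
  assert (HK1 : 1 <= INR K) by (apply (le_INR 1); unfold K; lia).
  assert (Hsqrt := proj1 (is_lim_seq_incr_1 (fun n => INR (Nat.sqrt n)) _) is_lim_seq_sqrt_nat).
  apply is_lim_seq_spec in Hsqrt.
  apply filter_imp with (2 := Hsqrt (Rmax (INR K) (2 * (INR K ^ 3 + 3) / eps))).
  intros n Hn. set (s := INR (Nat.sqrt (S n))) in Hn.
  assert (HKs : INR K < s) by (eapply Rle_lt_trans; [apply Rmax_l|exact Hn]).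
  assert (Hcube : 2 * (INR K ^ 3 + 3) / eps < s) by (eapply Rle_lt_trans; [apply Rmax_r|exact Hn]).
  assert (Hdefect := half_sub_poisson_below_mean_le_sqrt n K ltac:(unfold K; lia) ltac:(apply INR_lt in HKs; lia)).
  assert (Hhalf := poisson_below_mean_le_half n).
  fold s in Hdefect.
  assert (0 <= INR K ^ 3 + 3) by (assert (0 <= INR K ^ 3) by (apply pow_le; lra); lra).
  assert ((INR K ^ 3 + 3) / s < eps / 2).
  { apply Rmult_lt_reg_r with (2 * s / eps); [apply Rdiv_lt_0_compat; lra|].
    field_simplify; lra. }
  assert (6 / INR K < eps / 2).
  { apply Rmult_lt_reg_r with (2 * INR K / eps); [apply Rdiv_lt_0_compat; lra|].
    field_simplify; lra. }
  rewrite Rabs_left1 by lra. lra.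
Qed.

Lemma P_SN_eq q z l : l = q / (1 - q) ->
  P_SN q z = 1 - exp (- (INR z * l)) * exp_sum (INR z * l) z
             + exp (- (INR z * l)) * l ^ z * exp_sum (INR z) z.
Proof.
  intros ->. unfold P_SN, exp_sum.
  replace (INR z * q / (1 - q)) with (INR z * (q / (1 - q))) by (unfold Rdiv; ring).
  set (l := q / (1 - q)). set (mu := INR z * l).
  rewrite (sum_lt_ext z _ (fun k => exp (- mu) * exp_term mu k
                                    - exp (- mu) * l ^ z * exp_term (INR z) k)).
  - rewrite sum_lt_minus, !sum_lt_scal. ring.
  - intros k Hk. unfold exp_term, mu.
    replace (l ^ z) with (l ^ k * l ^ (z - k)) by (rewrite <- pow_add; f_equal; lia).
    rewrite Rpow_mult_distr. unfold Rdiv. ring.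
Qed.

Lemma exp_mul_c_fun z l : 0 < l ->
  exp (- (INR z * c_fun l)) = exp (- (INR z * l)) * exp (INR z) * l ^ z.
Proof.
  intros Hl. unfold c_fun.
  replace (- (INR z * (l - 1 - ln l))) with (- (INR z * l) + INR z + INR z * ln l) by ring.
  rewrite !exp_plus, <- (Rpower_pow z l Hl). reflexivity.
Qed.

Lemma P_SN_ratio_eq q z l : l = q / (1 - q) -> 0 < l ->
  P_SN q z / (exp (- (INR z * c_fun l)) / 2)
  = 2 * (exp (- INR z) * exp_sum (INR z) z)
    + 2 * ((exp (INR z * l) - exp_sum (INR z * l) z) / (exp (INR z) * l ^ z)).
Proof.
  intros Hq Hl. rewrite (P_SN_eq q z l Hq), exp_mul_c_fun by exact Hl.
  rewrite !exp_Ropp.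
  assert (0 < exp (INR z * l)) by apply exp_pos.
  assert (0 < exp (INR z)) by apply exp_pos.
  assert (0 < l ^ z) by (apply pow_lt; lra).
  field. lra.
Qed.

Lemma exp_sub_exp_sum_mul_le z l : 0 <= l < 1 ->
  0 <= exp (INR z * l) - exp_sum (INR z * l) z <= l ^ z * exp_term (INR z) z / (1 - l).
Proof.
  intros Hl. assert (0 <= INR z) by apply pos_INR.
  assert (Hmu : 0 <= INR z * l) by nra.
  split; [assert (Hsum := exp_sum_le_exp _ z Hmu); lra|].
  assert (Hlt : INR z * l < INR (S z)) by (rewrite S_INR; nra).
  eapply Rle_trans; [exact (exp_sub_exp_sum_le _ z Hmu Hlt)|].
  replace (exp_term (INR z * l) z) with (l ^ z * exp_term (INR z) z)
    by (unfold exp_term; rewrite Rpow_mult_distr; unfold Rdiv; ring).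
  assert (0 <= l ^ z * exp_term (INR z) z).
  { apply Rmult_le_pos; [apply pow_le; lra|now apply exp_term_ge0]. }
  unfold Rdiv. apply Rmult_le_compat_l; [lra|].
  rewrite S_INR. assert (0 < INR z + 1 - INR z * l) by nra.
  apply Rmult_le_reg_r with ((INR z + 1 - INR z * l) * (1 - l)); [apply Rmult_lt_0_compat; lra|].
  field_simplify; lra.
Qed.

Lemma is_lim_seq_exp_tail_ratio l : 0 < l < 1 ->
  is_lim_seq (fun z => (exp (INR z * l) - exp_sum (INR z * l) z) / (exp (INR z) * l ^ z)) 0.
Proof.
  intros Hl.
  apply is_lim_seq_le_le with (u := fun _ => 0)
    (w := fun z => exp (- INR z) * exp_term (INR z) z * / (1 - l)).
  - intros z.
    assert (Htail := exp_sub_exp_sum_mul_le z l ltac:(lra)).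
    assert (0 < exp (INR z)) by apply exp_pos.
    assert (0 < l ^ z) by (apply pow_lt; lra).
    assert (0 < exp (INR z) * l ^ z) by (apply Rmult_lt_0_compat; lra).
    split; [apply Rdiv_le_0_compat; lra|].
    apply Rle_trans with (l ^ z * exp_term (INR z) z / (1 - l) / (exp (INR z) * l ^ z)).
    + apply Rmult_le_compat_r; [apply Rlt_le, Rinv_0_lt_compat; lra|lra].
    + right. rewrite exp_Ropp. field. lra.
  - apply is_lim_seq_const.
  - replace (Finite 0) with (Finite (0 * / (1 - l))) by (f_equal; ring).
    apply (is_lim_seq_scal_r _ (/ (1 - l)) 0), is_lim_seq_poisson_at_mean.
Qed.

Theorem mainTheorem8 (q : R) (hq0 : 0 < q) (hq1 : q < 1 / 2) :
  is_lim_seq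
    (fun z : nat => P_SN q z / (exp (- (INR z * c_fun (q / (1 - q)))) / 2))
    1.
Proof.
  set (l := q / (1 - q)).
  assert (Hl : 0 < l < 1).
  { unfold l. split; [apply Rdiv_lt_0_compat; lra|].
    apply Rmult_lt_reg_r with (1 - q); [lra|]. field_simplify; lra. }
  apply (is_lim_seq_ext (fun z => 2 * (exp (- INR z) * exp_sum (INR z) z)
    + 2 * ((exp (INR z * l) - exp_sum (INR z * l) z) / (exp (INR z) * l ^ z)))).
  { intros z. symmetry. now apply P_SN_ratio_eq. }
  replace (Finite 1) with (Finite (2 * (1 / 2) + 2 * 0)) by (f_equal; field).
  apply is_lim_seq_plus'.
  - apply (is_lim_seq_scal_l _ 2 (1 / 2)), is_lim_seq_poisson_below_mean.
  - apply (is_lim_seq_scal_l _ 2 0), is_lim_seq_exp_tail_ratio, Hl.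
Qed.
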